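(* Let $f$ and $g$ be L-additive arithmetic functions whose associated completely multiplicative functions $h_f$, $h_g$ are nonzero-valued, with generalized von Mangoldt functions $\Lambda_f,\Lambda_g$. Then for every positive integer $n$: $(\Lambda_f\ast\Lambda_g)(n)=\frac{(\alpha-1)f(p)g(p)}{h_f(p)h_g(p)}$ if $n=p^\alpha$ for a prime $p$ and integer $\alpha\geq1$; $(\Lambda_f\ast\Lambda_g)(n)=\frac{f(p)g(q)}{h_f(p)h_g(q)}+\frac{f(q)g(p)}{h_f(q)h_g(p)}$ if $n=p^\alpha q^\beta$ for distinct primes $p,q$ and integers $\alpha,\beta\geq1$; and $(\Lambda_f\ast\Lambda_g)(n)=0$ otherwise.
   Context: An arithmetic function $f:\mathbb{N}\to\mathbb{C}$ is L-additive if there is a completely multiplicative function $h_f$ such that $f(mn)=f(m)h_f(n)+f(n)h_f(m)$ for all positive integers $m,n$; such an $h_f$ is fixed (likewise $h_g$ for $g$). $\Lambda_f(n)=\frac{f(p)}{h_f(p)}$ if $n=p^k$ for some prime $p$ and integer $k\geq1$, and $0$ otherwise (similarly $\Lambda_g$). $\ast$ is Dirichlet convolution $(F\ast G)(n)=\sum_{d\mid n}F(d)G(n/d)$. *)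

From mathcomp Require Import all_boot all_order all_algebra.
From mathcomp Require Import Rstruct complex.
Set Implicit Arguments. Unset Strict Implicit. Unset Printing Implicit Defensive.
Import GRing.Theory Num.Theory.
Local Open Scope ring_scope.

Definition CC : fieldType := (Rdefinitions.R : rcfType)[i].

(* Arithmetic functions N -> C are modelled as nat -> CC; the value at 0 is
   irrelevant and all hypotheses quantify over positive integers only. *)

Definition completely_multiplicative (h : nat -> CC) : Prop :=
  h 1%N = 1 /\ forall m n : nat, (0 < m)%N -> (0 < n)%N -> h (m * n)%N = h m * h n.

Definition L_additive_wrt (f h : nat -> CC) : Prop :=
  completely_multiplicative h /\
  forall m n : nat, (0 < m)%N -> (0 < n)%N -> f (m * n)%N = f m * h n + f n * h m.

Definition is_prime_power (n : nat) : bool :=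
  [exists p : 'I_n.+1, exists k : 'I_n.+1, [&& prime p, (0 < k)%N & n == (p ^ k)%N]].

(* Generalized von Mangoldt function: Lambda_f(n) = f(p)/h_f(p) if n = p^k (p prime,
   k >= 1), 0 otherwise.  For such n, the prime p is pdiv n (the smallest prime divisor). *)
Definition vonMangoldt (f h : nat -> CC) (n : nat) : CC :=
  if is_prime_power n then f (pdiv n) / h (pdiv n) else 0.

Definition dconv (F G : nat -> CC) (n : nat) : CC :=
  \sum_(d <- divisors n) F d * G (n %/ d)%N.

From mathcomp Require Import all_boot all_order all_algebra.
From mathcomp Require Import Rstruct complex zify ring.
Import GRing.Theory.
Local Open Scope ring_scope.

(* Since [Lambda_f] vanishes off prime powers, a term [Lambda_f(d) Lambda_g(n/d)] of the
   convolution survives only when both [d] and [n/d] are prime powers; so [n] has at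
   most two prime factors, and the surviving divisors are [p^i] with [0 < i < a] when
   [n = p^a], and exactly [p^a] and [q^b] when [n = p^a q^b]. *)

Lemma is_prime_powerP n :
  reflect (exists p k, [/\ prime p, (0 < k)%N & n = (p ^ k)%N]) (is_prime_power n).
Proof.
apply: (iffP existsP) => [[p /existsP [k /and3P [pp k_gt0 /eqP ->]]]|].
  by exists p, k.
case=> p [k [pp k_gt0 ->]].
have p_gt1 := prime_gt1 pp.
have p_lt : (p < (p ^ k).+1)%N.
  by case: k k_gt0 => // k _; rewrite expnS ltnS leq_pmulr // expn_gt0; lia.
have k_lt : (k < (p ^ k).+1)%N by apply: ltnW; rewrite ltnS ltn_expl.
exists (Ordinal p_lt); apply/existsP; exists (Ordinal k_lt) => /=.
by rewrite pp k_gt0 eqxx.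
Qed.

Section VonMangoldt.
Variables f h : nat -> CC.

Lemma vonMangoldt1 : vonMangoldt f h 1 = 0.
Proof.
rewrite /vonMangoldt; case: is_prime_powerP => // -[p [k [pp k_gt0 /eqP]]].
by rewrite -[X in X == _](expn0 p) eqn_exp2l ?prime_gt1 // eq_sym eqn0Ngt k_gt0.
Qed.

Lemma vonMangoldt_pfactor p k :
  prime p -> (0 < k)%N -> vonMangoldt f h (p ^ k) = f p / h p.
Proof.
move=> pp k_gt0; rewrite /vonMangoldt; case: is_prime_powerP => [_|[]].
  by case: k k_gt0 => // k _; rewrite pdiv_pfactor.
by exists p, k.
Qed.

Lemma vonMangoldt_neq0 d : vonMangoldt f h d != 0 ->
  exists p k, [/\ prime p, (0 < k)%N & d = (p ^ k)%N].
Proof. by rewrite /vonMangoldt; case: is_prime_powerP; rewrite ?eqxx. Qed.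

End VonMangoldt.

Lemma perm_divisors_pfactor p a :
  prime p -> perm_eq (divisors (p ^ a)) [seq (p ^ i)%N | i <- index_iota 0 a.+1].
Proof.
move=> pp; have p_gt1 := prime_gt1 pp.
apply: uniq_perm; first exact: divisors_uniq.
  by rewrite map_inj_uniq ?iota_uniq //; apply: expnI.
move=> d; rewrite -dvdn_divisors ?expn_gt0 ?prime_gt0 //.
apply/dvdn_pfactor/mapP => // -[k].
  by move=> le_ka ->; exists k; rewrite // mem_index_iota.
by rewrite mem_index_iota => /andP [_ lt_ka] ->; exists k.
Qed.

Lemma dconv_pfactor (F G : nat -> CC) p a : prime p ->
  dconv F G (p ^ a) = \sum_(0 <= i < a.+1) F (p ^ i)%N * G (p ^ (a - i))%N.
Proof.
move=> pp; rewrite /dconv (perm_big _ (perm_divisors_pfactor p a pp)) big_map.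
apply: eq_big_nat => i /andP [_ le_ia].
by rewrite -expnB ?prime_gt0.
Qed.

Lemma sum_seq_support2 (V : nmodType) (r : seq nat) x y (F : nat -> V) :
  uniq r -> x \in r -> y \in r -> y != x ->
  (forall i, i \in r -> i != x -> i != y -> F i = 0) ->
  \sum_(i <- r) F i = F x + F y.
Proof.
move=> r_uniq xr yr yx F0.
rewrite (bigD1_seq x) //= -big_filter.
rewrite (bigD1_seq y) ?filter_uniq ?mem_filter ?yx //=.
rewrite big1_seq ?addr0 // => i /andP [iy]; rewrite mem_filter => /andP [ix ir].
exact: F0.
Qed.

Lemma logn_pfactor2 t p q a b : prime p -> prime q ->
  logn t (p ^ a * q ^ b) = (a * (t == p) + b * (t == q))%N.
Proof.
by move=> pp pq; rewrite lognM ?expn_gt0 ?prime_gt0 // !lognX !logn_prime.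
Qed.

Lemma pfactor2_left_factor p q a b r s i j :
  prime p -> prime q -> p != q -> (0 < a)%N -> (0 < b)%N ->
  prime r -> prime s -> (0 < i)%N ->
  (r ^ i * s ^ j = p ^ a * q ^ b)%N -> (r ^ i = p ^ a \/ r ^ i = q ^ b)%N.
Proof.
move=> pp pq pq_neq a_gt0 b_gt0 pr ps i_gt0 e.
have logn_eq t : (i * (t == r) + j * (t == s) = a * (t == p) + b * (t == q))%N.
  by rewrite -!logn_pfactor2 // e.
have Lp := logn_eq p; have Lq := logn_eq q; have Lr := logn_eq r.
have qp_neq : q != p by rewrite eq_sym.
case: (eqVneq r p) => [rp | rp]; [left | case: (eqVneq r q) => [rq | rq]; [right |]].
- subst r; case: (eqVneq s p) => [sp | sp].
    by move: Lq; rewrite sp (negbTE qp_neq) /=; lia.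
  move: Lp; rewrite eqxx (eq_sym p s) (negbTE sp) (negbTE pq_neq) => Lp.
  by congr (_ ^ _)%N; lia.
- subst r; case: (eqVneq s q) => [sq | sq].
    by move: Lp; rewrite sq (negbTE pq_neq) /=; lia.
  move: Lq; rewrite eqxx (eq_sym q s) (negbTE sq) (negbTE qp_neq) => Lq.
  by congr (_ ^ _)%N; lia.
- by move: Lr; rewrite eqxx (negbTE rp) (negbTE rq) /=; lia.
Qed.

Section Convolution.
Variables f hf g hg : nat -> CC.
Local Notation conv := (dconv (vonMangoldt f hf) (vonMangoldt g hg)).

Lemma dconv_vonMangoldt_term_neq0 n d : (0 < n)%N -> d \in divisors n ->
  vonMangoldt f hf d * vonMangoldt g hg (n %/ d) != 0 ->
  exists r i s j, [/\ prime r, prime s, (0 < i)%N & (0 < j)%N] /\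
    d = (r ^ i)%N /\ n = (r ^ i * s ^ j)%N.
Proof.
move=> n_gt0 dn; rewrite mulf_eq0 negb_or => /andP [].
move=> /vonMangoldt_neq0 [r [i [pr i_gt0 ed]]] /vonMangoldt_neq0 [s [j [ps j_gt0 ej]]].
exists r, i, s, j; do !split => //.
by rewrite -ed -ej mulnC divnK // dvdn_divisors.
Qed.

Lemma dconv_vonMangoldt_pfactor p a : prime p -> (0 < a)%N ->
  conv (p ^ a) = a.-1%:R * f p * g p / (hf p * hg p).
Proof.
move=> pp; case: a => // a _; rewrite dconv_pfactor //.
rewrite big_nat_recl // big_nat_recr //= expn0 subnn vonMangoldt1 mul0r add0r.
rewrite vonMangoldt1 mulr0 addr0.
rewrite (eq_big_nat _ _ (F2 := fun _ => f p / hf p * (g p / hg p))); last first.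
  by move=> i /andP [_ lt_ia]; rewrite !vonMangoldt_pfactor //; lia.
by rewrite sumr_const_nat subn0 -mulr_natl invfM; ring.
Qed.

Lemma dconv_vonMangoldt_pfactor2 p q a b :
  prime p -> prime q -> p != q -> (0 < a)%N -> (0 < b)%N ->
  conv (p ^ a * q ^ b) = f p * g q / (hf p * hg q) + f q * g p / (hf q * hg p).
Proof.
move=> pp pq pq_neq a_gt0 b_gt0.
have n_gt0 : (0 < p ^ a * q ^ b)%N by rewrite muln_gt0 !expn_gt0 !prime_gt0.
have pa_div : (p ^ a)%N \in divisors (p ^ a * q ^ b).
  by rewrite -dvdn_divisors // dvdn_mulr.
have qb_div : (q ^ b)%N \in divisors (p ^ a * q ^ b).
  by rewrite -dvdn_divisors // dvdn_mull.
have qb_neq : (q ^ b)%N != (p ^ a)%N.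
  apply/eqP => /(congr1 (logn p)).
  by rewrite !lognX !logn_prime // eqxx (negbTE pq_neq); lia.
rewrite /dconv (@sum_seq_support2 _ _ _ _ _ (divisors_uniq _) pa_div qb_div qb_neq); last first.
  move=> d dn d_neq_pa d_neq_qb; apply/eqP; apply: contraNT d_neq_pa.
  case/(dconv_vonMangoldt_term_neq0 _ _ n_gt0 dn) => r [i [s [j [[pr ps i_gt0 _] [ed e]]]]].
  case: (pfactor2_left_factor _ _ _ _ _ _ _ _ pp pq pq_neq a_gt0 b_gt0 pr ps i_gt0 (esym e)).
    by rewrite ed => ->.
  by move=> ri_eq; rewrite ed ri_eq eqxx in d_neq_qb.
rewrite mulKn ?expn_gt0 ?prime_gt0 // mulnK ?expn_gt0 ?prime_gt0 //.
by rewrite !vonMangoldt_pfactor // !invfM; ring.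
Qed.

Lemma dconv_vonMangoldt_eq0 n : (0 < n)%N ->
  (~ exists p a, [/\ prime p, (0 < a)%N & n = (p ^ a)%N]) ->
  (~ exists p q a b,
      [/\ prime p, prime q, p != q, (0 < a)%N & (0 < b)%N] /\ n = (p ^ a * q ^ b)%N) ->
  conv n = 0.
Proof.
move=> n_gt0 not_pfactor not_pfactor2.
rewrite /dconv big1_seq // => d /andP [_ dn]; apply/eqP; apply: contraT.
case/(dconv_vonMangoldt_term_neq0 _ _ n_gt0 dn) => r [i [s [j [[pr ps i_gt0 j_gt0] [_ e]]]]].
case: (eqVneq r s) => [rs | rs].
  by case: not_pfactor; exists r, (i + j)%N; rewrite e -rs expnD addn_gt0 i_gt0.
by case: not_pfactor2; exists r, s, i, j.
Qed.

End Convolution.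

Theorem theorem2p5 (f g hf hg : nat -> CC)
  (Hf : L_additive_wrt f hf) (Hg : L_additive_wrt g hg)
  (hf_nz : forall n : nat, (0 < n)%N -> hf n != 0)
  (hg_nz : forall n : nat, (0 < n)%N -> hg n != 0)
  (n : nat) (n_pos : (0 < n)%N) :
  (forall (p a : nat), prime p -> (0 < a)%N -> n = (p ^ a)%N ->
     dconv (vonMangoldt f hf) (vonMangoldt g hg) n
     = (a.-1)%:R * f p * g p / (hf p * hg p)) /\
  (forall (p q a b : nat), prime p -> prime q -> p != q -> (0 < a)%N -> (0 < b)%N ->
     n = (p ^ a * q ^ b)%N ->
     dconv (vonMangoldt f hf) (vonMangoldt g hg) n
     = f p * g q / (hf p * hg q) + f q * g p / (hf q * hg p)) /\
  ((~ exists p a : nat, [/\ prime p, (0 < a)%N & n = (p ^ a)%N]) ->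
   (~ exists p q a b : nat,
        [/\ prime p, prime q, p != q, (0 < a)%N & (0 < b)%N] /\ n = (p ^ a * q ^ b)%N) ->
   dconv (vonMangoldt f hf) (vonMangoldt g hg) n = 0).
Proof.
split; [|split].
- by move=> p a pp a_gt0 ->; apply: dconv_vonMangoldt_pfactor.
- by move=> p q a b pp pq pq_neq a_gt0 b_gt0 ->; apply: dconv_vonMangoldt_pfactor2.
- exact: dconv_vonMangoldt_eq0.
Qed.
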